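(* Let $f$ be a transcendental entire function and let $P$ be a bounded periodic component of the Fatou set $F(f)$. Then $\partial P \cap BU(f) = \emptyset$.
   Context: For an entire function $f$, $f^n$ denotes the $n$-th iterate. The Fatou set $F(f)$ is the set of points having a neighbourhood on which the family $\{f^n\}$ is normal; a component $P$ of $F(f)$ is periodic if $f^p(P)\subset P$ for some $p\ge 1$. The escaping set is $I(f)=\{z\in\mathbb{C}: f^n(z)\to\infty \text{ as } n\to\infty\}$, the set of points with bounded orbit is $K(f)=\{z\in\mathbb{C}: \text{there is } R>0 \text{ with } |f^n(z)|\le R \text{ for all } n\ge 0\}$, and the Bungee set is $BU(f)=\mathbb{C}\setminus (I(f)\cup K(f))$, i.e. the set of $z$ whose orbit is unbounded but does not tend to $\infty$ (equivalently, there are sequences $n_k\to\infty$, $m_k\to\infty$ and $R>0$ with $|f^{n_k}(z)|\le R$ for all $k$ and $f^{m_k}(z)\to\infty$). *)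

From Stdlib Require Import Reals List.
From Coquelicot Require Import Coquelicot.
Open Scope R_scope.

Definition iter (f : C -> C) (n : nat) (z : C) : C := Nat.iter n f z.

Definition entire (f : C -> C) : Prop :=
  forall z : C, ex_derive (K := C_AbsRing) (V := C_NormedModule) f z.

(* polynomial evaluation (Horner form), coefficients listed from degree 0 *)
Definition peval (l : list C) (z : C) : C :=
  fold_right (fun a acc => Cplus a (Cmult z acc)) (RtoC 0) l.

Definition is_polynomial (f : C -> C) : Prop :=
  exists l : list C, forall z, f z = peval l z.

Definition transcendental_entire (f : C -> C) : Prop :=
  entire f /\ ~ is_polynomial f.

Definition disc (a : C) (r : R) : C -> Prop := fun z => Cmod (Cminus z a) < r.
Definition cdisc (a : C) (r : R) : C -> Prop := fun z => Cmod (Cminus z a) <= r.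

Definition is_open (U : C -> Prop) : Prop :=
  forall z, U z -> exists r, 0 < r /\ forall w, disc z r w -> U w.

Definition loc_unif_cvg (U : C -> Prop) (g : nat -> C -> C) (h : C -> C) : Prop :=
  forall z, U z -> exists r, 0 < r /\ (forall w, cdisc z r w -> U w) /\
    forall eps, 0 < eps -> exists N, forall k w, (N <= k)%nat -> cdisc z r w ->
      Cmod (Cminus (g k w) (h w)) < eps.

Definition loc_unif_infty (U : C -> Prop) (g : nat -> C -> C) : Prop :=
  forall z, U z -> exists r, 0 < r /\ (forall w, cdisc z r w -> U w) /\
    forall M, exists N, forall k w, (N <= k)%nat -> cdisc z r w -> M < Cmod (g k w).

(* the family {f^n} is normal on U (Montel's sense, limit infinity allowed):
   every sequence f^(n_k) has a subsequence converging locally uniformly on U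
   either to a (finite-valued) function or to infinity *)
Definition normal_iterates (f : C -> C) (U : C -> Prop) : Prop :=
  forall nk : nat -> nat, exists phi : nat -> nat,
    (forall k, (phi k < phi (S k))%nat) /\
    ((exists h : C -> C, loc_unif_cvg U (fun k => iter f (nk (phi k))) h) \/
     loc_unif_infty U (fun k => iter f (nk (phi k)))).

Definition Fatou (f : C -> C) (z : C) : Prop :=
  exists U, is_open U /\ U z /\ normal_iterates f U.

Definition connected_set (S : C -> Prop) : Prop :=
  ~ exists A B : C -> Prop, is_open A /\ is_open B /\
      (forall z, S z -> A z \/ B z) /\
      (forall z, S z -> A z -> B z -> False) /\
      (exists z, S z /\ A z) /\ (exists z, S z /\ B z).

Definition component_of (X P : C -> Prop) : Prop :=
  exists z0, X z0 /\
    forall w, P w <-> exists S, connected_set S /\ (forall u, S u -> X u) /\ S z0 /\ S w.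

Definition periodic_Fatou_component (f : C -> C) (P : C -> Prop) : Prop :=
  component_of (Fatou f) P /\
  exists p : nat, (1 <= p)%nat /\ forall z, P z -> P (iter f p z).

Definition bounded_set (P : C -> Prop) : Prop :=
  exists M, forall z, P z -> Cmod z <= M.

Definition cl_set (S : C -> Prop) (z : C) : Prop :=
  forall r, 0 < r -> exists w, S w /\ disc z r w.

Definition boundary (S : C -> Prop) (z : C) : Prop :=
  cl_set S z /\ cl_set (fun w => ~ S w) z.

Definition escaping (f : C -> C) (z : C) : Prop :=
  forall M, exists N, forall n, (N <= n)%nat -> M < Cmod (iter f n z).

Definition bounded_orbit (f : C -> C) (z : C) : Prop :=
  exists R, 0 < R /\ forall n, Cmod (iter f n z) <= R.

Definition Bungee (f : C -> C) (z : C) : Prop :=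
  ~ escaping f z /\ ~ bounded_orbit f z.

(* If f^p(P) ⊆ P with
   p >= 1 and P is bounded by M, then its closure is bounded by M as well and,
   since f^p is continuous, the closure is again mapped into itself by f^p.
   Hence for z in the closure every point f^(q p)(z) has modulus at most M.
   Writing n = q p + j with j < p, we get f^n(z) = f^j(f^(q p)(z)), and the
   finitely many continuous maps f^0, ..., f^(p-1) are bounded on the compact
   disc of radius M.  So every boundary point of P has a bounded orbit, which
   excludes membership in the Bungee set. *)
From Pilot Require Import Defs.
From Stdlib Require Import Reals Lra Lia List Classical ClassicalEpsilon.
From Coquelicot Require Import Coquelicot.
Open Scope R_scope.

Definition Ccontinuous (g : C -> C) : Prop :=
  forall x eps, 0 < eps -> exists d, 0 < d /\
    forall w, Cmod (Cminus w x) < d -> Cmod (Cminus (g w) (g x)) < eps.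

Lemma Cmod_Cminus_sym (a b : C) : Cmod (Cminus a b) = Cmod (Cminus b a).
Proof. rewrite <- Cmod_opp. f_equal. unfold Cminus. ring. Qed.

Lemma Cmod_le_shift (a b : C) : Cmod b <= Cmod a + Cmod (Cminus b a).
Proof.
  pose proof (Cmod_triangle a (Cminus b a)) as T.
  replace (Cplus a (Cminus b a)) with b in T by (unfold Cminus; ring).
  exact T.
Qed.

(* Complex differentiability implies continuity; Coquelicot's filter
   continuity is converted to epsilon-delta form, the norm on C being
   comparable to Cmod up to a factor sqrt 2. *)
Lemma entire_Ccontinuous (f : C -> C) : entire f -> Ccontinuous f.
Proof.
  intros Hf x eps Heps.
  pose proof (ex_derive_continuous _ _ (Hf x)) as Hc.
  assert (Heps' : 0 < eps / sqrt 2).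
  { apply Rdiv_lt_0_compat; [lra | apply sqrt_lt_R0; lra]. }
  destruct (proj1 (filterlim_locally _ _) Hc (mkposreal _ Heps')) as [d Hd].
  exists d. split; [apply cond_pos |]. intros w Hw.
  pose proof (@norm_compat2 C_AbsRing C_NormedModule _ _ _ (Hd w Hw)) as H.
  change (Cmod (Cminus (f w) (f x)) < sqrt 2 * (eps / sqrt 2)) in H.
  replace (sqrt 2 * (eps / sqrt 2)) with eps in H; [exact H |].
  field. apply Rgt_not_eq, sqrt_lt_R0; lra.
Qed.

Lemma Ccontinuous_comp (g h : C -> C) :
  Ccontinuous g -> Ccontinuous h -> Ccontinuous (fun w => g (h w)).
Proof.
  intros Hg Hh x eps Heps.
  destruct (Hg (h x) eps Heps) as [d1 [Hd1 H1]].
  destruct (Hh x d1 Hd1) as [d2 [Hd2 H2]].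
  exists d2. split; auto.
Qed.

Lemma iter_add (f : C -> C) (a b : nat) (z : C) :
  iter f (a + b) z = iter f a (iter f b z).
Proof. unfold iter. induction a; simpl; congruence. Qed.

Lemma iter_Ccontinuous (f : C -> C) :
  Ccontinuous f -> forall n, Ccontinuous (iter f n).
Proof.
  intros Hf n. induction n as [| n IH].
  - intros x eps Heps. exists eps. auto.
  - exact (Ccontinuous_comp f (iter f n) Hf IH).
Qed.

Lemma cl_set_bounded (P : C -> Prop) (M : R) :
  (forall z, P z -> Cmod z <= M) -> forall w, cl_set P w -> Cmod w <= M.
Proof.
  intros HM w Hw. apply Rnot_lt_le. intros Hlt.
  destruct (Hw (Cmod w - M)) as [u [Pu Du]]; [lra |].
  unfold Defs.disc in Du. rewrite Cmod_Cminus_sym in Du.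
  pose proof (HM u Pu). pose proof (Cmod_le_shift u w). lra.
Qed.

Lemma cl_set_invariant (g : C -> C) (P : C -> Prop) :
  Ccontinuous g -> (forall z, P z -> P (g z)) ->
  forall w, cl_set P w -> cl_set P (g w).
Proof.
  intros Hg HP w Hw r Hr.
  destruct (Hg w r Hr) as [d [Hd H]].
  destruct (Hw d Hd) as [u [Pu Du]].
  exists (g u). split; [apply HP, Pu | apply H, Du].
Qed.

Lemma cl_set_invariant_iter_mul (f : C -> C) (P : C -> Prop) (p : nat) :
  Ccontinuous f -> (forall z, P z -> P (iter f p z)) ->
  forall q w, cl_set P w -> cl_set P (iter f (q * p) w).
Proof.
  intros Hf HP q. induction q as [| q IH]; intros w Hw; [exact Hw |].
  simpl. rewrite iter_add.
  apply (cl_set_invariant (iter f p)); auto using iter_Ccontinuous.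
Qed.

Definition pt (t : Compactness.Tn 2 R) : C := (fst t, fst (snd t)).

Lemma list_image_bounded (g : C -> C) (l : list (Compactness.Tn 2 R)) :
  exists B, forall t, In t l -> Cmod (g (pt t)) <= B.
Proof.
  induction l as [| a l [B HB]].
  - exists 0. intros t [].
  - exists (Rmax (Cmod (g (pt a))) B). intros t [<- | Ht].
    + apply Rmax_l.
    + eapply Rle_trans; [apply HB, Ht | apply Rmax_r].
Qed.

Lemma cdisc_in_square (M : R) (w : C) :
  Cmod w <= M ->
  Compactness.bounded_n 2 (-M, (-M, tt)) (M, (M, tt)) (fst w, (snd w, tt)).
Proof.
  destruct w as [w1 w2]. intros Hw.
  pose proof (Rmax_Cmod (w1, w2)) as Hm. simpl in Hm.
  pose proof (Rmax_l (Rabs w1) (Rabs w2)). pose proof (Rmax_r (Rabs w1) (Rabs w2)).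
  simpl. unfold Rabs in *.
  repeat split; destruct (Rcase_abs w1); destruct (Rcase_abs w2); lra.
Qed.

Lemma close_Cmod (d : R) (w : C) (t : Compactness.Tn 2 R) :
  Compactness.close_n 2 d (fst w, (snd w, tt)) t -> Cmod (Cminus w (pt t)) < 2 * d.
Proof.
  destruct w as [w1 w2], t as [t1 [t2 []]]. simpl. intros [h1 [h2 _]].
  eapply Rle_lt_trans; [apply Cmod_2Rmax |]. simpl.
  assert (Hs : sqrt 2 < 2).
  { rewrite <- (sqrt_square 2) at 2 by lra. apply sqrt_lt_1; lra. }
  assert (Hr : Rmax (Rabs (w1 + - t1)) (Rabs (w2 + - t2)) < d)
    by (apply Rmax_lub_lt; auto).
  pose proof (Rmax_l (Rabs (w1 + - t1)) (Rabs (w2 + - t2))).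
  pose proof (Rabs_pos (w1 + - t1)).
  nra.
Qed.

(* A continuous map is bounded on every closed disc centred at 0: cover the
   enclosing square by finitely many small squares on which g varies by
   less than 1, and bound g at their centres. *)
Lemma Ccontinuous_bounded_on_disc (g : C -> C) (M : R) :
  Ccontinuous g -> exists B, forall w, Cmod w <= M -> Cmod (g w) <= B.
Proof.
  intros Hg.
  assert (Hgauge : forall t, exists d : posreal,
    forall w, Cmod (Cminus w (pt t)) < 2 * d -> Cmod (Cminus (g w) (g (pt t))) < 1).
  { intros t. destruct (Hg (pt t) 1 Rlt_0_1) as [d [Hd H]].
    assert (Hd2 : 0 < d / 2) by lra. exists (mkposreal _ Hd2).
    simpl. intros w Hw. apply H. lra. }
  set (delta t := proj1_sig (constructive_indefinite_description _ (Hgauge t))).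
  assert (Hdelta : forall t w, Cmod (Cminus w (pt t)) < 2 * delta t ->
    Cmod (Cminus (g w) (g (pt t))) < 1).
  { intros t. exact (proj2_sig (constructive_indefinite_description _ (Hgauge t))). }
  apply NNPP. intros Hno.
  apply (compactness_list 2 (-M, (-M, tt)) (M, (M, tt)) delta). intros [l Hl].
  apply Hno. destruct (list_image_bounded g l) as [B HB].
  exists (B + 1). intros w Hw.
  destruct (Hl _ (cdisc_in_square M w Hw)) as [t [Ht [_ Hclose]]].
  pose proof (Hdelta _ _ (close_Cmod _ w t Hclose)) as Hnear.
  pose proof (HB _ Ht).
  pose proof (Cmod_le_shift (g (pt t)) (g w)). lra.
Qed.

Lemma finite_family_bounded_on_disc (g : nat -> C -> C) (M : R) :
  (forall j, Ccontinuous (g j)) -> forall p,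
  exists B, forall j w, (j < p)%nat -> Cmod w <= M -> Cmod (g j w) <= B.
Proof.
  intros Hg p. induction p as [| p [B HB]].
  - exists 0. intros j w Hj. lia.
  - destruct (Ccontinuous_bounded_on_disc (g p) M (Hg p)) as [B' HB'].
    exists (Rmax B B'). intros j w Hj Hw.
    destruct (Nat.eq_dec j p) as [-> | Hne].
    + eapply Rle_trans; [apply HB', Hw | apply Rmax_r].
    + eapply Rle_trans; [apply HB; [lia | exact Hw] | apply Rmax_l].
Qed.

Lemma closure_of_bounded_periodic_set_bounded_orbit
    (f : C -> C) (P : C -> Prop) (p : nat) (M : R) :
  Ccontinuous f -> (1 <= p)%nat -> (forall z, P z -> P (iter f p z)) ->
  (forall z, P z -> Cmod z <= M) ->
  forall z, cl_set P z -> bounded_orbit f z.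
Proof.
  intros Hf Hp HP HM z Hz.
  destruct (finite_family_bounded_on_disc (iter f) M (iter_Ccontinuous f Hf) p)
    as [B HB].
  exists (Rmax 1 B). split; [eapply Rlt_le_trans; [apply Rlt_0_1 | apply Rmax_l] |].
  intros n.
  (* f^n(z) = f^(n mod p)(f^((n / p) p)(z)) with the inner point in the closure. *)
  rewrite (Nat.div_mod n p), Nat.add_comm, iter_add, Nat.mul_comm by lia.
  eapply Rle_trans; [| apply Rmax_r]. apply HB.
  - apply Nat.mod_upper_bound. lia.
  - apply (cl_set_bounded P M HM), cl_set_invariant_iter_mul; auto.
Qed.

Theorem theorem1 (f : C -> C) (P : C -> Prop) :
  transcendental_entire f ->
  periodic_Fatou_component f P ->
  bounded_set P ->
  forall z, boundary P z -> ~ Bungee f z.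
Proof.
  intros [Hentire _] [_ [p [Hp HP]]] [M HM] z [Hcl _] [_ Hunbounded].
  apply Hunbounded.
  exact (closure_of_bounded_periodic_set_bounded_orbit f P p M
           (entire_Ccontinuous f Hentire) Hp HP HM z Hcl).
Qed.
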